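(* Let $\eta_{0},\eta_{1},\eta_{2}>0$ and $\beta(s)=\eta_{0}\exp(-\eta_{1}s^{\eta_{2}})$ for $s>0$, and fix $a>0$. Let $K(u)=u\beta(1/u)$ for $u>0$, $K(0)=0$, $K^{*}(v)=\sup_{u\ge0}\{uv-K(u)\}$, and $F_{a}(x)=\int_{x}^{a}\frac{\mathrm{d}v}{K^{*}(v)}$ for $x\in(0,a]$, with inverse $F_{a}^{-1}$. Then there exist $C>0$ and $0<v_{0}<1\wedge a$ such that for all $v\in(0,v_{0}]$, \[ K^{*}(v)\ge Cv\Big(\log\frac{1}{v}\Big)^{-1/\eta_{2}}, \] and there exists $C'>0$ such that for all $n\in\mathbb{N}$, \[ F_{a}^{-1}(n)\le C'\exp\Big(-\Big(C\frac{1+\eta_{2}}{\eta_{2}}n\Big)^{\eta_{2}/(1+\eta_{2})}\Big). \] *)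

From Stdlib Require Import Reals Lra ClassicalEpsilon.
From Coquelicot Require Import Coquelicot.
Open Scope R_scope.

(* real power x^y for x >= 0, with the convention 0^y = 0 (y > 0) *)
Definition rpow (x y : R) : R :=
  if Req_EM_T x 0 then 0 else Rpower x y.

Definition beta (eta0 eta1 eta2 s : R) : R :=
  eta0 * exp (- eta1 * rpow s eta2).

Definition Kfun (eta0 eta1 eta2 u : R) : R :=
  if Rlt_dec 0 u then u * beta eta0 eta1 eta2 (/ u) else 0.

Definition Kstar (eta0 eta1 eta2 v : R) : Rbar :=
  Lub_Rbar (fun y => exists u, 0 <= u /\ y = u * v - Kfun eta0 eta1 eta2 u).

Definition invKstar (eta0 eta1 eta2 v : R) : R :=
  match Kstar eta0 eta1 eta2 v with
  | Finite r => / r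
  | _ => 0
  end.

Definition Fa (eta0 eta1 eta2 a x : R) : R :=
  RInt (invKstar eta0 eta1 eta2) x a.

Definition Fa_inv (eta0 eta1 eta2 a t : R) : R :=
  epsilon (inhabits 0) (fun x => 0 < x <= a /\ Fa eta0 eta1 eta2 a x = t).

From Stdlib Require Import Reals Lra Lia Classical ClassicalEpsilon.
From Coquelicot Require Import Coquelicot.
Open Scope R_scope.

(* Testing the supremum defining [K*(v)] at a point [u] where [K u] is negligible against
   [u v] gives [K*(v) >= kappa v L^(-1/eta2)] for small [v], with [L = ln (1/v)].  Hence
   [1/K*(v) <= L^(1/eta2) / (kappa v)], whose primitive is [- L^q / (kappa q)] with
   [q = (1 + eta2) / eta2]; so [n = F_a(x) <= A + ln(1/x)^q / (kappa q)], which inverts to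
   the stretched-exponential bound on [x = F_a^-1(n)].  That [F_a^-1(n)] exists at all
   follows from [K*(v) <= v] near [0] (so [F_a] is unbounded) and the continuity of [F_a];
   the integrals make sense because [1/K*] is monotone. *)

Definition step_at (y x : R) : R := if Rle_dec y x then 1 else 0.

Fixpoint staircase (d : R) (n : nat) (x : R) : R :=
  match n with
  | O => 0
  | S k => staircase d k x + d * step_at (INR n * d) x
  end.

Lemma staircase_spec d n x : 0 < d -> 0 <= x ->
  staircase d n x <= x /\ staircase d n x <= INR n * d /\
  (staircase d n x = INR n * d \/ x < staircase d n x + d).
Proof.
intros hd hx; induction n as [|n [IHx [IHn IHd]]].
- simpl; rewrite Rmult_0_l; lra.
- change (staircase d (S n) x) with (staircase d n x + d * step_at (INR (S n) * d) x).
  rewrite S_INR, Rmult_plus_distr_r, Rmult_1_l; unfold step_at.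
  destruct (Rle_dec (INR n * d + d) x) as [hle|hgt].
  + assert (Hfull : staircase d n x = INR n * d) by (destruct IHd; [auto|lra]).
    rewrite Hfull; lra.
  + destruct IHd as [Hfull|Hgap]; [rewrite Hfull in *|]; lra.
Qed.

Lemma staircase_approx d n x : 0 < d -> 0 <= x <= INR n * d ->
  0 <= x - staircase d n x < d.
Proof.
intros hd hx; destruct (staircase_spec d n x hd (proj1 hx)) as [Hx [_ [Hfull|Hgap]]]; lra.
Qed.

Lemma ex_RInt_step_at_decreasing g y c d : decreasing g ->
  ex_RInt (fun t => step_at y (g t)) c d.
Proof.
intros Hg.
enough (H : forall c d, c <= d -> ex_RInt (fun t => step_at y (g t)) c d)
  by (destruct (Rle_dec c d); [auto|apply ex_RInt_swap, H; lra]).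
clear c d; intros c d hcd.
destruct (classic (exists t, c <= t <= d /\ y <= g t)) as [Hex|Hno].
- destruct (completeness (fun t => c <= t <= d /\ y <= g t)) as [s [Hub Hlub]].
  { exists d; intros t Ht; lra. }
  { exact Hex. }
  destruct Hex as [t0 Ht0].
  assert (hcs : c <= s) by (apply Rle_trans with t0; [lra|apply Hub; auto]).
  assert (hsd : s <= d) by (apply Hlub; intros t Ht; lra).
  apply ex_RInt_Chasles with s.
  + apply (ex_RInt_ext (fun _ => 1)); [|apply ex_RInt_const].
    intros t Ht; rewrite Rmin_left, Rmax_right in Ht by lra.
    unfold step_at; destruct (Rle_dec y (g t)) as [_|hlt]; [reflexivity|].
    exfalso; enough (s <= t) by lra.
    apply Hlub; intros t' [Ht' hy].
    destruct (Rle_dec t' t) as [|hgt]; [auto|].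
    exfalso; apply hlt, Rle_trans with (g t'); [exact hy|apply Hg; lra].
  + apply (ex_RInt_ext (fun _ => 0)); [|apply ex_RInt_const].
    intros t Ht; rewrite Rmin_left, Rmax_right in Ht by lra.
    unfold step_at; destruct (Rle_dec y (g t)) as [hy|_]; [|reflexivity].
    exfalso; enough (t <= s) by lra.
    apply Hub; split; [lra|exact hy].
- apply (ex_RInt_ext (fun _ => 0)); [|apply ex_RInt_const].
  intros t Ht; rewrite Rmin_left, Rmax_right in Ht by lra.
  unfold step_at; destruct (Rle_dec y (g t)) as [hy|_]; [|reflexivity].
  exfalso; apply Hno; exists t; split; [lra|exact hy].
Qed.

Lemma ex_RInt_staircase_decreasing g d n c e : decreasing g ->
  ex_RInt (fun t => staircase d n (g t)) c e.
Proof.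
intros Hg; induction n as [|n IH].
- simpl; apply ex_RInt_const.
- apply (ex_RInt_plus (fun t => staircase d n (g t))
    (fun t => d * step_at (INR (S n) * d) (g t))); [exact IH|].
  apply (ex_RInt_scal (fun t => step_at (INR (S n) * d) (g t))).
  now apply ex_RInt_step_at_decreasing.
Qed.

(* A bounded decreasing function is the uniform limit of staircases whose steps
   are indicators of the (interval-shaped) superlevel sets of the function. *)
Lemma ex_RInt_decreasing_bounded g m M c e : decreasing g ->
  (forall t, m <= g t <= M) -> ex_RInt g c e.
Proof.
intros Hg Hb.
assert (hmM : m <= M) by (destruct (Hb 0); lra).
set (d := fun n : nat => (M - m + 1) / INR (S n)).
assert (hd : forall n, 0 < d n)
  by (intros n; apply Rdiv_lt_0_compat; [lra|apply lt_0_INR; lia]).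
set (f := fun (n : nat) t => m + staircase (d n) (S n) (g t - m)).
assert (Hgm : decreasing (fun t => g t - m)) by (intros s t hst; specialize (Hg s t hst); lra).
assert (Hf : forall n, is_RInt (f n) c e (RInt (f n) c e)).
{ intros n; apply (RInt_correct (V := R_CompleteNormedModule)).
  apply (ex_RInt_plus (fun _ => m)); [apply ex_RInt_const|].
  now apply ex_RInt_staircase_decreasing. }
destruct (filterlim_RInt f c e eventually eventually_filter g _ Hf) as [If [_ HI]].
2: exists If; exact HI.
intros P [eps HP].
destruct (INR_unbounded ((M - m + 1) / eps)) as [N HN].
exists N; intros n hn; apply HP; intros t.
change (Rabs (f n t - g t) < eps).
assert (hSn : INR N < INR (S n)) by (apply lt_INR; lia).
assert (hdn : d n < eps).
{ assert (0 < eps) by apply cond_pos.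
  pose proof (pos_INR N).
  apply Rlt_div_l in HN; [|lra].
  unfold d; apply Rlt_div_l; [lra|nra]. }
assert (Happrox : 0 <= g t - m <= INR (S n) * d n).
{ replace (INR (S n) * d n) with (M - m + 1)
    by (unfold d; field; apply not_0_INR; lia).
  destruct (Hb t); lra. }
destruct (staircase_approx (d n) (S n) (g t - m) (hd n) Happrox).
unfold f; rewrite Rabs_left1; lra.
Qed.

Lemma exp_le_compat x y : x <= y -> exp x <= exp y.
Proof. intros [hxy|<-]; [apply Rlt_le, exp_increasing, hxy|apply Rle_refl]. Qed.

Lemma ln_inv_pos v : 0 < v < 1 -> 0 < ln (/ v).
Proof.
intros hv; rewrite ln_Rinv by lra.
enough (ln v < ln 1) by (rewrite ln_1 in *; lra).
apply ln_increasing; lra.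
Qed.

Lemma rpow_Rpower x y : 0 < x -> rpow x y = Rpower x y.
Proof. intros hx; unfold rpow; destruct (Req_EM_T x 0); [lra|reflexivity]. Qed.

Lemma rpow_ge0 x y : 0 <= rpow x y.
Proof. unfold rpow; destruct (Req_EM_T x 0); [lra|apply Rlt_le, exp_pos]. Qed.

Lemma rpow_le_rpow x y p : 0 <= p -> 0 <= x <= y -> rpow x p <= rpow y p.
Proof.
intros hp hxy; unfold rpow.
destruct (Req_EM_T x 0), (Req_EM_T y 0); try lra.
- apply Rlt_le, exp_pos.
- apply Rle_Rpower_l; lra.
Qed.

Lemma le_exp_neg_rpow x q s : 0 < q -> 0 < x < 1 -> 0 < s <= Rpower (ln (/ x)) q ->
  x <= exp (- rpow s (/ q)).
Proof.
intros hq hx hs.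
assert (hL := ln_inv_pos x hx).
assert (Hs : rpow s (/ q) <= ln (/ x)).
{ rewrite rpow_Rpower by lra.
  rewrite <- (Rpower_1 (ln (/ x))), <- (Rinv_r q), <- Rpower_mult by lra.
  apply Rle_Rpower_l; [apply Rlt_le, Rinv_0_lt_compat|]; lra. }
rewrite <- (exp_ln x) at 1 by lra.
replace (ln x) with (- ln (/ x)) by (rewrite ln_Rinv; lra).
destruct (Req_dec (rpow s (/ q)) (ln (/ x))) as [E|E]; [rewrite E; lra|].
apply Rlt_le, exp_increasing; lra.
Qed.

Lemma is_RInt_ln_inv_pow p x y : p + 1 <> 0 -> 0 < x <= y -> y < 1 ->
  is_RInt (fun v => Rpower (ln (/ v)) p / v) x y
    ((Rpower (ln (/ x)) (p + 1) - Rpower (ln (/ y)) (p + 1)) / (p + 1)).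
Proof.
intros hp hx hy.
replace ((Rpower (ln (/ x)) (p + 1) - Rpower (ln (/ y)) (p + 1)) / (p + 1))
  with ((- Rpower (ln (/ y)) (p + 1) / (p + 1)) - (- Rpower (ln (/ x)) (p + 1) / (p + 1)))
  by (field; exact hp).
apply (is_RInt_derive (fun v => - Rpower (ln (/ v)) (p + 1) / (p + 1))).
- intros t ht; rewrite Rmin_left, Rmax_right in ht by lra.
  assert (hL := ln_inv_pos t ltac:(lra)).
  unfold Rpower; auto_derive.
  + repeat split; try lra; apply Rinv_0_lt_compat; lra.
  + replace ((p + 1) * ln (ln (/ t))) with (p * ln (ln (/ t)) + ln (ln (/ t))) by ring.
    rewrite exp_plus, (exp_ln (ln (/ t))) by lra.
    field; repeat split; lra.
- intros t ht; rewrite Rmin_left, Rmax_right in ht by lra.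
  assert (hL := ln_inv_pos t ltac:(lra)).
  apply (@ex_derive_continuous R_AbsRing R_NormedModule).
  unfold Rpower; auto_derive; repeat split; try lra; apply Rinv_0_lt_compat; lra.
Qed.

Lemma continuity_RInt_lower g b : (forall c d, ex_RInt g c d) ->
  continuity (fun y => RInt g y b).
Proof.
intros Hg y; apply continuity_pt_filterlim.
apply (continuous_RInt_2 g y b), filter_forall.
intros y'; apply (RInt_correct (V := R_CompleteNormedModule)), Hg.
Qed.

Lemma RInt_ge_ln f x y : 0 < x <= y -> ex_RInt f x y ->
  (forall t, x < t < y -> / t <= f t) -> ln y - ln x <= RInt f x y.
Proof.
intros hxy Hf Hinv.
assert (Hln : is_RInt (fun t => / t) x y (ln y - ln x)).
{ apply (is_RInt_derive ln).
  - intros t ht; rewrite Rmin_left, Rmax_right in ht by lra.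
    apply is_derive_ln; lra.
  - intros t ht; rewrite Rmin_left, Rmax_right in ht by lra.
    apply continuity_pt_filterlim, continuity_pt_inv; [apply continuity_pt_id|lra]. }
rewrite <- (is_RInt_unique _ _ _ _ Hln).
apply RInt_le; [lra|eexists; exact Hln|exact Hf|exact Hinv].
Qed.

Section Legendre.

Variables eta0 eta1 eta2 : R.
Hypotheses (h0 : 0 < eta0) (h1 : 0 < eta1) (h2 : 0 < eta2).

Local Notation K := (Kfun eta0 eta1 eta2).
Local Notation Ks := (Kstar eta0 eta1 eta2).
Local Notation invK := (invKstar eta0 eta1 eta2).

Definition kappa : R := / 2 * Rpower (eta1 / 2) (/ eta2).

Lemma kappa_pos : 0 < kappa.
Proof. apply Rmult_lt_0_compat; [lra|apply exp_pos]. Qed.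

Lemma Kfun_pos_eq u : 0 < u -> K u = u * eta0 * exp (- eta1 * Rpower (/ u) eta2).
Proof.
intros hu; unfold Kfun, beta, rpow.
destruct (Rlt_dec 0 u) as [_|]; [|lra].
destruct (Req_EM_T (/ u) 0) as [e|_]; [|ring].
exfalso; apply Rinv_neq_0_compat in e; lra.
Qed.

Lemma Kfun_ge0 u : 0 <= K u.
Proof.
destruct (Rlt_dec 0 u) as [hu|hu]; [|unfold Kfun; destruct (Rlt_dec 0 u); lra].
rewrite Kfun_pos_eq by exact hu.
apply Rmult_le_pos; [apply Rmult_le_pos|apply Rlt_le, exp_pos]; lra.
Qed.

Lemma Kstar_ge_affine u v : 0 <= u -> Rbar_le (u * v - K u) (Ks v).
Proof.
intros hu; unfold Kstar.
destruct (Lub_Rbar_correct (fun y => exists u, 0 <= u /\ y = u * v - K u)) as [Hub _].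
apply Hub; exists u; split; [exact hu|reflexivity].
Qed.

Lemma Kstar_le_affine v b :
  (forall u, 0 <= u -> u * v - K u <= b) -> Rbar_le (Ks v) b.
Proof.
intros Hb; unfold Kstar.
destruct (Lub_Rbar_correct (fun y => exists u, 0 <= u /\ y = u * v - K u)) as [_ Hlub].
apply Hlub; intros y [u [hu ->]]; exact (Hb u hu).
Qed.

Lemma Kstar_le_Kstar v w : v <= w -> Rbar_le (Ks v) (Ks w).
Proof.
intros hvw; unfold Kstar at 1.
destruct (Lub_Rbar_correct (fun y => exists u, 0 <= u /\ y = u * v - K u)) as [_ Hlub].
apply Hlub; intros y [u [hu ->]].
eapply Rbar_le_trans; [|apply (Kstar_ge_affine u w hu)].
simpl; nra.
Qed.

(* For [u <= 1], [u v <= v] and [K u >= 0]; for [u > 1], [K u >= u eta0 exp (- eta1) >= u v]. *)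
Lemma Kstar_le_id v : 0 <= v <= eta0 * exp (- eta1) -> Rbar_le (Ks v) v.
Proof.
intros hv; apply Kstar_le_affine; intros u hu.
pose proof (Kfun_ge0 u).
destruct (Rle_dec u 1) as [hu1|hu1]; [nra|].
rewrite Kfun_pos_eq by lra.
set (E := exp (- eta1 * Rpower (/ u) eta2)).
assert (Hpow : Rpower (/ u) eta2 < 1).
{ unfold Rpower; rewrite <- exp_0; apply exp_increasing.
  rewrite ln_Rinv by lra.
  assert (0 < ln u) by (rewrite <- ln_1; apply ln_increasing; lra).
  nra. }
assert (HE : exp (- eta1) <= E).
{ apply Rlt_le, exp_increasing; pose proof (exp_pos (eta2 * ln (/ u))).
  unfold Rpower in *; nra. }
assert (u * v <= u * (eta0 * E)) by (apply Rmult_le_compat_l; nra).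
lra.
Qed.

(* The witness [u = (eta1 / (2 L))^(1/eta2)], [L = ln (1/v)], makes [K u = u eta0 v^2]. *)
Lemma Kstar_ge_log v : 0 < v < 1 -> eta0 * v <= / 2 ->
  Rbar_le (kappa * v * Rpower (ln (/ v)) (- / eta2)) (Ks v).
Proof.
intros hv hv2.
set (L := ln (/ v)).
assert (hL : 0 < L) by (apply ln_inv_pos, hv).
set (u := Rpower (eta1 / 2) (/ eta2) * Rpower L (- / eta2)).
assert (hu : 0 < u) by (apply Rmult_lt_0_compat; apply exp_pos).
assert (Hpow : Rpower (/ u) eta2 = 2 * L / eta1).
{ unfold u, Rpower.
  rewrite ln_Rinv, ln_mult, !ln_exp by (try apply Rmult_lt_0_compat; apply exp_pos).
  replace (eta2 * - (/ eta2 * ln (eta1 / 2) + - / eta2 * ln L))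
    with (ln L + - ln (eta1 / 2)) by (field; lra).
  rewrite exp_plus, exp_Ropp, !exp_ln by lra.
  field; lra. }
assert (HKu : K u = u * eta0 * (v * v)).
{ rewrite Kfun_pos_eq, Hpow by exact hu.
  replace (- eta1 * (2 * L / eta1)) with (ln v + ln v)
    by (unfold L; rewrite ln_Rinv by lra; field; lra).
  rewrite exp_plus, exp_ln by lra; reflexivity. }
eapply Rbar_le_trans; [|apply (Kstar_ge_affine u v (Rlt_le _ _ hu))].
simpl; rewrite HKu.
assert (Hkappa : kappa * v * Rpower L (- / eta2) = u * v / 2) by (unfold kappa, u; field).
fold L; rewrite Hkappa.
assert (0 < u * v) by (apply Rmult_lt_0_compat; lra).
assert (u * eta0 * (v * v) <= u * v / 2).
{ replace (u * eta0 * (v * v)) with ((u * v) * (eta0 * v)) by ring.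
  replace (u * v / 2) with ((u * v) * / 2) by field.
  apply Rmult_le_compat_l; lra. }
lra.
Qed.

Lemma small_scale_exists w : 0 < w -> exists v, 0 < v <= w /\ v < 1 /\ eta0 * v <= / 2.
Proof.
intros hw.
set (v := Rmin w (/ (2 * (eta0 + 1)))).
assert (hv : 0 < v) by (apply Rmin_pos; [lra|apply Rinv_0_lt_compat; lra]).
assert (Hv : v * (2 * (eta0 + 1)) <= 1).
{ apply (Rmult_le_reg_r (/ (2 * (eta0 + 1)))); [apply Rinv_0_lt_compat; lra|].
  rewrite Rmult_assoc, Rinv_r, Rmult_1_r, Rmult_1_l by lra; apply Rmin_r. }
exists v; split; [split; [exact hv|apply Rmin_l]|split; nra].
Qed.

Lemma Kstar_pos v : 0 < v -> exists b, 0 < b /\ Rbar_le b (Ks v).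
Proof.
intros hv; destruct (small_scale_exists v hv) as [v' [hv' [hv'1 hv'2]]].
exists (kappa * v' * Rpower (ln (/ v')) (- / eta2)); split.
- apply Rmult_lt_0_compat; [apply Rmult_lt_0_compat; [apply kappa_pos|lra]|apply exp_pos].
- eapply Rbar_le_trans; [apply Kstar_ge_log; lra|].
  apply Kstar_le_Kstar; lra.
Qed.

Lemma invKstar_le_inv v b : 0 < b -> Rbar_le b (Ks v) -> 0 <= invK v <= / b.
Proof.
intros hb Hb; unfold invKstar.
destruct (Ks v) as [r| |]; simpl in Hb; try contradiction.
- split; [apply Rlt_le, Rinv_0_lt_compat|apply Rinv_le_contravar]; lra.
- split; [lra|apply Rlt_le, Rinv_0_lt_compat, hb].
Qed.

Lemma invKstar_ge0 v : 0 < v -> 0 <= invK v.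
Proof.
intros hv; destruct (Kstar_pos v hv) as [b [hb Hb]].
apply (invKstar_le_inv v b hb Hb).
Qed.

Lemma invKstar_decreasing v w : 0 < v -> v <= w -> invK w <= invK v.
Proof.
intros hv hvw; destruct (Kstar_pos v hv) as [b [hb Hb]].
assert (Hvw := Kstar_le_Kstar v w hvw).
unfold invKstar.
destruct (Ks v) as [r| |]; simpl in Hb; try contradiction;
  destruct (Ks w) as [r'| |]; simpl in Hvw; try contradiction.
- apply Rinv_le_contravar; lra.
- apply Rlt_le, Rinv_0_lt_compat; lra.
- lra.
Qed.

Lemma invKstar_ge_inv v : 0 < v <= eta0 * exp (- eta1) -> / v <= invK v.
Proof.
intros hv; destruct (Kstar_pos v (proj1 hv)) as [b [hb Hb]].
assert (Hv := Kstar_le_id v ltac:(lra)).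
unfold invKstar.
destruct (Ks v) as [r| |]; simpl in Hb, Hv; try contradiction.
apply Rinv_le_contravar; lra.
Qed.

Lemma invKstar_le_log v : 0 < v < 1 -> eta0 * v <= / 2 ->
  invK v <= / kappa * (Rpower (ln (/ v)) (/ eta2) / v).
Proof.
intros hv hv2.
assert (hb : 0 < kappa * v * Rpower (ln (/ v)) (- / eta2)).
{ apply Rmult_lt_0_compat; [apply Rmult_lt_0_compat; [apply kappa_pos|lra]|apply exp_pos]. }
eapply Rle_trans; [apply (invKstar_le_inv v _ hb), Kstar_ge_log; assumption|].
right; rewrite Rpower_Ropp.
pose proof kappa_pos; pose proof (exp_pos (/ eta2 * ln (ln (/ v)))).
unfold Rpower in *; field; lra.
Qed.

Lemma ex_RInt_invKstar_Rmax x1 c d : 0 < x1 -> ex_RInt (fun t => invK (Rmax x1 t)) c d.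
Proof.
intros hx1.
assert (Hpos : forall t, 0 < Rmax x1 t) by (intros t; apply Rlt_le_trans with x1; [exact hx1|apply Rmax_l]).
apply (ex_RInt_decreasing_bounded _ 0 (invK x1)).
- intros s t hst; apply invKstar_decreasing; [apply Hpos|apply Rle_max_compat_l, hst].
- intros t; split; [apply invKstar_ge0, Hpos|apply invKstar_decreasing; [exact hx1|apply Rmax_l]].
Qed.

Lemma ex_RInt_invKstar c d : 0 < c <= d -> ex_RInt invK c d.
Proof.
intros hcd; apply (ex_RInt_ext (fun t => invK (Rmax c t))).
- intros t ht; rewrite Rmin_left, Rmax_right in ht by lra.
  rewrite Rmax_right by lra; reflexivity.
- apply ex_RInt_invKstar_Rmax; lra.
Qed.

End Legendre.

Section Fa_inverse.

Variables eta0 eta1 eta2 a : R.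
Hypotheses (h0 : 0 < eta0) (h1 : 0 < eta1) (h2 : 0 < eta2) (ha : 0 < a).

Local Notation invK := (invKstar eta0 eta1 eta2).
Local Notation F := (Fa eta0 eta1 eta2 a).

(* [1/K*(v) >= 1/v] near [0] makes [F] diverge there; the intermediate value theorem
   is applied to a continuous extension of [F] obtained by freezing [1/K*] below [x1]. *)
Lemma Fa_surjective z : 0 <= z -> exists x, 0 < x <= a /\ F x = z.
Proof.
intros hz.
set (v1 := Rmin a (eta0 * exp (- eta1))).
assert (hv1 : 0 < v1) by (apply Rmin_pos; [lra|apply Rmult_lt_0_compat; [lra|apply exp_pos]]).
assert (hv1a : v1 <= a) by apply Rmin_l.
set (x1 := v1 * exp (- z)).
assert (hx1 : 0 < x1) by (apply Rmult_lt_0_compat; [lra|apply exp_pos]).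
assert (hx1v1 : x1 <= v1).
{ assert (exp (- z) <= 1) by (rewrite <- exp_0; apply exp_le_compat; lra).
  unfold x1; nra. }
set (g := fun t => invK (Rmax x1 t)).
assert (Hg : forall c d, ex_RInt g c d) by (intros; apply ex_RInt_invKstar_Rmax; assumption).
set (G := fun y => RInt g y a).
assert (HGx1 : z <= G x1).
{ unfold G; rewrite <- (RInt_Chasles g x1 v1 a) by apply Hg.
  assert (Hhead : ln v1 - ln x1 <= RInt g x1 v1).
  { apply RInt_ge_ln; [lra|apply Hg|].
    intros t ht; unfold g; rewrite Rmax_right by lra.
    apply invKstar_ge_inv; try assumption.
    split; [lra|apply Rle_trans with v1; [lra|apply Rmin_r]]. }
  assert (Htail : 0 <= RInt g v1 a).
  { apply RInt_ge_0; [exact hv1a|apply Hg|].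
    intros t ht; apply invKstar_ge0; try assumption.
    apply Rlt_le_trans with x1; [exact hx1|apply Rmax_l]. }
  replace (ln x1) with (ln v1 - z) in Hhead
    by (unfold x1; rewrite ln_mult, ln_exp by (try apply exp_pos; lra); ring).
  change (z <= RInt g x1 v1 + RInt g v1 a); lra. }
assert (HGa : G a = 0) by apply (RInt_point (V := R_CompleteNormedModule)).
destruct (IVT_gen G x1 a z (continuity_RInt_lower g a Hg)) as [x [hx HGx]].
{ rewrite HGa, Rmin_right, Rmax_left by lra; lra. }
rewrite Rmin_left, Rmax_right in hx by lra.
exists x; split; [lra|].
rewrite <- HGx; apply RInt_ext.
intros t ht; rewrite Rmin_left, Rmax_right in ht by lra.
unfold g; rewrite Rmax_right by lra; reflexivity.
Qed.

Lemma Fa_inv_spec z : 0 <= z ->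
  0 < Fa_inv eta0 eta1 eta2 a z <= a /\ F (Fa_inv eta0 eta1 eta2 a z) = z.
Proof.
intros hz; exact (epsilon_spec (inhabits 0) (fun x => 0 < x <= a /\ F x = z) (Fa_surjective z hz)).
Qed.

Lemma Fa_le_tail v0 x : 0 < v0 <= x -> x <= a -> F x <= (a - v0) * invK v0.
Proof.
intros hv0 hxa.
assert (Hbound : forall t, x <= t <= a -> Rabs (invK t) <= invK v0).
{ intros t ht; rewrite Rabs_right.
  - apply (invKstar_decreasing eta0 eta1 eta2); lra.
  - apply Rle_ge, (invKstar_ge0 eta0 eta1 eta2); lra. }
assert (0 <= invK v0) by (apply (invKstar_ge0 eta0 eta1 eta2); lra).
eapply Rle_trans; [apply Rle_abs|].
eapply Rle_trans; [apply abs_RInt_le_const; [exact hxa|apply ex_RInt_invKstar; lra|exact Hbound]|].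
apply Rmult_le_compat_r; lra.
Qed.

Lemma Fa_le_log v0 x : 0 < x <= v0 -> v0 < 1 -> eta0 * v0 <= / 2 -> v0 <= a ->
  F x <= (a - v0) * invK v0 +
    Rpower (ln (/ x)) ((1 + eta2) / eta2) / (kappa eta1 eta2 * ((1 + eta2) / eta2)).
Proof.
intros hx hv0 hv02 hv0a.
set (q := (1 + eta2) / eta2).
assert (hq : q = / eta2 + 1) by (unfold q; field; lra).
assert (hq0 : / eta2 + 1 <> 0) by (rewrite <- hq; unfold q; apply Rgt_not_eq, Rdiv_lt_0_compat; lra).
assert (hk := kappa_pos eta1 eta2).
assert (Hint := is_RInt_ln_inv_pow (/ eta2) x v0 hq0 hx hv0); rewrite <- hq in Hint.
unfold Fa; rewrite <- (RInt_Chasles _ x v0 a) by (apply ex_RInt_invKstar; lra).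
assert (Hhead : RInt invK x v0 <=
  / kappa eta1 eta2 * ((Rpower (ln (/ x)) q - Rpower (ln (/ v0)) q) / q)).
{ assert (Hscal : is_RInt (fun v => / kappa eta1 eta2 * (Rpower (ln (/ v)) (/ eta2) / v)) x v0
    (/ kappa eta1 eta2 * ((Rpower (ln (/ x)) q - Rpower (ln (/ v0)) q) / q)))
    by exact (is_RInt_scal _ _ _ (/ kappa eta1 eta2) _ Hint).
  rewrite <- (is_RInt_unique _ _ _ _ Hscal).
  apply RInt_le; [lra|apply ex_RInt_invKstar; lra|eexists; exact Hscal|].
  intros t ht; apply (invKstar_le_log eta0 eta1 eta2); try assumption; [lra|].
  apply Rle_trans with (eta0 * v0); [apply Rmult_le_compat_l|]; lra. }
assert (Htail := Fa_le_tail v0 v0 ltac:(lra) hv0a).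
unfold Fa in Htail.
assert (0 < Rpower (ln (/ v0)) q / (kappa eta1 eta2 * q)).
{ apply Rdiv_lt_0_compat; [apply exp_pos|apply Rmult_lt_0_compat; [exact hk|]].
  unfold q; apply Rdiv_lt_0_compat; lra. }
assert (Hsplit : / kappa eta1 eta2 * ((Rpower (ln (/ x)) q - Rpower (ln (/ v0)) q) / q)
  = Rpower (ln (/ x)) q / (kappa eta1 eta2 * q) - Rpower (ln (/ v0)) q / (kappa eta1 eta2 * q)).
{ field; split; [unfold q; apply Rgt_not_eq, Rdiv_lt_0_compat|]; lra. }
change (RInt invK x v0 + RInt invK v0 a <= (a - v0) * invK v0 + Rpower (ln (/ x)) q / (kappa eta1 eta2 * q)).
lra.
Qed.

(* The factor [2] absorbs the bounded contribution [(a - v0) / K*(v0)] of [[v0, a]]. *)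
Lemma Fa_bounded_or_log_large v0 x : 0 < v0 < 1 -> eta0 * v0 <= / 2 -> v0 <= a -> 0 < x <= a ->
  F x <= 2 * ((a - v0) * invK v0) \/
  (x < 1 /\ kappa eta1 eta2 / 2 * ((1 + eta2) / eta2) * F x <= Rpower (ln (/ x)) ((1 + eta2) / eta2)).
Proof.
intros hv0 hv02 hv0a hx.
set (q := (1 + eta2) / eta2); set (k := kappa eta1 eta2); set (A := (a - v0) * invK v0).
assert (hA : 0 <= A) by (apply Rmult_le_pos; [|apply invKstar_ge0]; lra).
destruct (Rle_dec v0 x) as [hvx|hvx].
{ left; pose proof (Fa_le_tail v0 x ltac:(lra) (proj2 hx)) as Htail; fold A in Htail; lra. }
destruct (Rle_dec (F x) (2 * A)) as [hF|hF]; [left; exact hF|right; split; [lra|]].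
assert (Hlog := Fa_le_log v0 x ltac:(lra) (proj2 hv0) hv02 hv0a); fold q k A in Hlog.
assert (0 < k * q) by (apply Rmult_lt_0_compat; [apply kappa_pos|unfold q; apply Rdiv_lt_0_compat]; lra).
replace (k / 2 * q * F x) with (F x / 2 * (k * q)) by field.
apply Rle_div_r; lra.
Qed.

End Fa_inverse.

Lemma le_exp_decay_of_dichotomy a x z c B q : 0 < q -> 0 < c -> 0 <= B -> 0 < x <= a -> 0 <= z ->
  z <= B \/ (x < 1 /\ c * z <= Rpower (ln (/ x)) q) ->
  x <= Rmax 1 a * exp (rpow (c * B) (/ q)) * exp (- rpow (c * z) (/ q)).
Proof.
intros hq hc hB hx hz Hcase.
set (R0 := rpow (c * B) (/ q)); set (r := rpow (c * z) (/ q)).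
assert (h1R0 : 1 <= exp R0) by (rewrite <- exp_0; apply exp_le_compat, rpow_ge0).
assert (h1a : 1 <= Rmax 1 a) by apply Rmax_l.
assert (hC : 1 <= Rmax 1 a * exp R0) by nra.
assert (hr : 0 < exp (- r)) by apply exp_pos.
destruct (Rle_dec z B) as [hzB|hzB].
- assert (Hr : r <= R0).
  { apply rpow_le_rpow; [apply Rlt_le, Rinv_0_lt_compat, hq|split; nra]. }
  assert (1 <= exp R0 * exp (- r)).
  { rewrite <- exp_plus, <- exp_0; apply exp_le_compat; lra. }
  assert (a <= Rmax 1 a) by apply Rmax_r.
  rewrite Rmult_assoc; nra.
- destruct Hcase as [|[hx1 Hlog]]; [lra|].
  assert (x <= exp (- r)) by (apply le_exp_neg_rpow; [exact hq|lra|split; [nra|exact Hlog]]).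
  nra.
Qed.

Theorem lemma15 (eta0 eta1 eta2 a : R)
  (h0 : 0 < eta0) (h1 : 0 < eta1) (h2 : 0 < eta2) (ha : 0 < a) :
  exists C v0 : R, 0 < C /\ 0 < v0 /\ v0 < Rmin 1 a /\
    (forall v, 0 < v <= v0 ->
       Rbar_le (Finite (C * v * rpow (ln (/ v)) (- / eta2)))
               (Kstar eta0 eta1 eta2 v)) /\
    exists C' : R, 0 < C' /\
      forall n : nat,
        Fa_inv eta0 eta1 eta2 a (INR n) <=
          C' * exp (- rpow (C * ((1 + eta2) / eta2) * INR n) (eta2 / (1 + eta2))).
Proof.
set (q := (1 + eta2) / eta2); set (C := kappa eta1 eta2 / 2).
assert (hq : 0 < q) by (apply Rdiv_lt_0_compat; lra).
assert (hC : 0 < C) by (pose proof (kappa_pos eta1 eta2); unfold C; lra).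
replace (eta2 / (1 + eta2)) with (/ q) by (unfold q; field; lra).
destruct (small_scale_exists eta0 h0 (a / 2) ltac:(lra)) as [v0 [hv0 [hv01 hv02]]].
exists C, v0; split; [exact hC|]; split; [lra|]; split; [apply Rmin_glb_lt; lra|].
split.
- intros v hv; rewrite rpow_Rpower by (apply ln_inv_pos; lra).
  eapply Rbar_le_trans; [|apply Kstar_ge_log; try assumption; [lra|]].
  + assert (0 < v * Rpower (ln (/ v)) (- / eta2)) by (apply Rmult_lt_0_compat; [lra|apply exp_pos]).
    simpl; unfold C; pose proof (kappa_pos eta1 eta2); nra.
  + apply Rle_trans with (eta0 * v0); [apply Rmult_le_compat_l|]; lra.
- set (A := (a - v0) * invKstar eta0 eta1 eta2 v0).
  assert (hA : 0 <= A) by (apply Rmult_le_pos; [|apply invKstar_ge0]; lra).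
  exists (Rmax 1 a * exp (rpow (C * q * (2 * A)) (/ q))).
  split; [apply Rmult_lt_0_compat; [apply Rlt_le_trans with 1; [lra|apply Rmax_l]|apply exp_pos]|].
  intros n.
  destruct (Fa_inv_spec eta0 eta1 eta2 a h0 h1 h2 ha (INR n) (pos_INR n)) as [hx hF].
  apply le_exp_decay_of_dichotomy; try lra; [nra|apply pos_INR|].
  set (x := Fa_inv eta0 eta1 eta2 a (INR n)) in *; rewrite <- hF.
  apply Fa_bounded_or_log_large; try assumption; lra.
Qed.
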